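(* Consider the following two-player game with parameters $N\ge 1$ (number of bins), a positive integer $b\ge 1$, and thresholds $k>k'$. Initially there are $N$ bins, each containing at least $k$ balls. In each round, first Player I removes a bin of smallest size (number of balls) among the remaining bins, and then Player II removes balls from the remaining bins, at most $b$ balls in total in that round, distributed arbitrarily. Player II wins if at some moment some remaining bin contains at most $k'$ balls; Player I wins if all bins are removed before this happens. If $b<\frac{k-k'}{\ln N+1}$, then Player I wins against every strategy of Player II. *)

From Stdlib Require Import Reals List Arith.
Import ListNotations.

(* A game state is the list of sizes (numbers of balls) of the remaining bins. *)

(* One round of the game, from state [l] to state [l'']:
   - Player I removes a bin [x] of smallest size among the remaining bins
     (any such bin: l = l1 ++ x :: l2 with x <= every size in l);
   - Player II then removes balls from the remaining bins [l1 ++ l2]: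
     each bin can only lose balls (pointwise <=), and at most [b] balls
     are removed in total in this round. *)
Definition round (b : nat) (l l'' : list nat) : Prop :=
  exists (l1 : list nat) (x : nat) (l2 : list nat),
    l = l1 ++ x :: l2 /\
    Forall (fun y => x <= y) l /\
    Forall2 le l'' (l1 ++ l2) /\
    list_sum (l1 ++ l2) <= list_sum l'' + b.

From Stdlib Require Import Reals List Permutation Lia Lra.
Import ListNotations.

(* Invariant: any j remaining bins together always hold at least j c_j balls,
   where c_j = k - b (H_{N-1} - H_{j-1}) with H the harmonic numbers.  For j
   bins s surviving a round, the bin x removed by Player I is at most the mean
   of s, so the bound c_{j+1} on the mean of x :: s passes to s; Player II then
   lowers the sum of s by at most b, which is exactly the drop from
   (j + 1) c_{j+1} - x to j c_j.  For j = 1 this leaves every bin at least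
   k - b H_{N-1} >= k - b (ln N + 1) > k' balls. *)

Definition submultiset {A : Type} (s l : list A) : Prop :=
  exists r, Permutation l (s ++ r).

Lemma submultiset_length {A : Type} (s l : list A) :
  submultiset s l -> length s <= length l.
Proof.
  intros [r Hp]. apply Permutation_length in Hp. rewrite Hp, length_app. lia.
Qed.

Lemma submultiset_Forall {A : Type} (P : A -> Prop) (s l : list A) :
  Forall P l -> submultiset s l -> Forall P s.
Proof.
  intros Hl [r Hp]. apply (Permutation_Forall Hp), Forall_app in Hl. tauto.
Qed.

Lemma In_submultiset {A : Type} (y : A) (l : list A) :
  In y l -> submultiset [y] l.
Proof.
  intros Hy. destruct (in_split y l Hy) as (l1 & l2 & ->).
  exists (l1 ++ l2). simpl. apply Permutation_sym, Permutation_middle.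
Qed.

Lemma submultiset_cons_middle {A : Type} (x : A) (s l1 l2 : list A) :
  submultiset s (l1 ++ l2) -> submultiset (x :: s) (l1 ++ x :: l2).
Proof.
  intros [r Hp]. exists r. simpl.
  apply Permutation_trans with (x :: l1 ++ l2).
  - apply Permutation_sym, Permutation_middle.
  - now apply perm_skip.
Qed.

Lemma list_sum_Forall2_le (l l' : list nat) :
  Forall2 le l l' -> list_sum l <= list_sum l'.
Proof. induction 1; simpl; lia. Qed.

Lemma list_sum_Forall_ge (x : nat) (s : list nat) :
  Forall (le x) s -> x * length s <= list_sum s.
Proof. induction 1; simpl; lia. Qed.

Lemma submultiset_Forall2_le (l l' s' : list nat) :
  Forall2 le l' l -> submultiset s' l' ->
  exists s, submultiset s l /\ length s = length s' /\
    list_sum s + list_sum l' <= list_sum s' + list_sum l.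
Proof.
  intros Hle [r' Hp].
  destruct (Permutation_Forall2 Hp Hle) as (m & Hm & Hle').
  destruct (Forall2_app_inv_l s' r' Hle') as (s & r & Hs & Hr & ->).
  exists s. split; [now exists r|]. split; [symmetry; exact (Forall2_length Hs)|].
  rewrite (Permutation_list_sum Hp), (Permutation_list_sum Hm), !list_sum_app.
  apply list_sum_Forall2_le in Hr. lia.
Qed.

Open Scope R_scope.

Fixpoint harmonic (n : nat) : R :=
  match n with
  | O => 0
  | S m => harmonic m + / INR (S m)
  end.

Lemma harmonic_le (m n : nat) : (m <= n)%nat -> harmonic m <= harmonic n.
Proof.
  induction 1 as [|n _ IH]; [lra|]. change (harmonic (S n)) with (harmonic n + / INR (S n)).
  assert (0 < / INR (S n)) by (apply Rinv_0_lt_compat, lt_0_INR; lia). lra.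
Qed.

Lemma ln_le_sub_1 (x : R) : 0 < x -> ln x <= x - 1.
Proof. intros Hx. pose proof (exp_ineq1_le (ln x)). rewrite exp_ln in *; lra. Qed.

Lemma harmonic_le_1_ln (n : nat) : (1 <= n)%nat -> harmonic n <= 1 + ln (INR n).
Proof.
  induction 1 as [|n Hn IH]; [simpl; rewrite ln_1; lra|].
  cbn [harmonic]. rewrite S_INR in *.
  assert (Hpos : 1 <= INR n) by (apply (le_INR 1); exact Hn).
  assert (Hlog : ln (INR n * / (INR n + 1)) <= INR n * / (INR n + 1) - 1)
    by (apply ln_le_sub_1, Rdiv_lt_0_compat; lra).
  rewrite ln_mult, ln_Rinv in Hlog by (try apply Rinv_0_lt_compat; lra).
  replace (INR n * / (INR n + 1) - 1) with (- / (INR n + 1)) in Hlog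
    by (field; lra).
  lra.
Qed.

Definition sums_bounded_by (c : nat -> R) (l : list nat) : Prop :=
  forall s, submultiset s l -> INR (length s) * c (length s) <= INR (list_sum s).

Lemma sums_bounded_by_init (k : nat) (c : nat -> R) (l : list nat) :
  Forall (le k) l -> (forall j, (j <= length l)%nat -> c j <= INR k) ->
  sums_bounded_by c l.
Proof.
  intros Hk Hc s Hs.
  pose proof (submultiset_length s l Hs) as Hlen.
  apply (submultiset_Forall _ s l Hk), list_sum_Forall_ge, le_INR in Hs.
  rewrite mult_INR in Hs.
  specialize (Hc _ Hlen). pose proof (pos_INR (length s)). nra.
Qed.

Lemma sums_bounded_by_In (c : nat -> R) (l : list nat) (y : nat) :
  sums_bounded_by c l -> In y l -> c 1%nat <= INR y.
Proof.
  intros Hc Hy. specialize (Hc _ (In_submultiset y l Hy)).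
  simpl in Hc. rewrite Nat.add_0_r in Hc. lra.
Qed.

Lemma round_preserves_sums_bounded (b : nat) (c : nat -> R)
  (c_step : forall j, (1 <= j)%nat -> c j + INR b / INR j <= c (S j))
  (l l' : list nat) :
  round b l l' -> sums_bounded_by c l -> sums_bounded_by c l'.
Proof.
  intros (l1 & x & l2 & -> & Hmin & Hle & Hbudget) Hc s Hs.
  destruct (submultiset_Forall2_le _ _ _ Hle Hs) as (s0 & Hs0 & Hlen & Hsum).
  assert (Hx : (x * length s0 <= list_sum s0)%nat).
  { apply list_sum_Forall_ge, (submultiset_Forall _ s0 (l1 ++ l2)); [|exact Hs0].
    rewrite Forall_app in Hmin |- *. simpl in Hmin. rewrite Forall_cons_iff in Hmin.
    tauto. }
  pose proof (Hc _ (submultiset_cons_middle x s0 l1 l2 Hs0)) as Hbefore.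
  simpl length in Hbefore. simpl list_sum in Hbefore.
  rewrite Hlen in Hx, Hbefore.
  destruct (length s) as [|j] eqn:Hj; [simpl; rewrite Rmult_0_l; apply pos_INR|].
  apply le_INR in Hx, Hsum, Hbudget.
  rewrite mult_INR in Hx. rewrite !plus_INR in Hsum.
  rewrite plus_INR in Hbudget, Hbefore.
  rewrite (S_INR (S j)) in Hbefore.
  specialize (c_step (S j) ltac:(lia)).
  set (J := INR (S j)) in *. set (C := c (S j)) in *. set (C' := c (S (S j))) in *.
  assert (HJ : 1 <= J) by (apply (le_INR 1); lia).
  (* x is at most the mean of s0, so (J + 1) C' <= x + sum s0 <= (1 + 1/J) sum s0. *)
  assert (Hmean : J * C' <= INR (list_sum s0)).
  { apply Rmult_le_reg_l with (J + 1); [lra|]. nra. }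
  assert (Hdrop : J * C + INR b <= J * C').
  { replace (J * C + INR b) with (J * (C + INR b / J)) by (field; lra).
    apply Rmult_le_compat_l; lra. }
  lra.
Qed.

Lemma mul_harmonic_pred_lt (N b : nat) (x : R) : (1 <= N)%nat ->
  INR b < x / (ln (INR N) + 1) -> INR b * harmonic (N - 1) < x.
Proof.
  intros hN hb.
  pose proof (harmonic_le (N - 1) N ltac:(lia)).
  pose proof (harmonic_le_1_ln N hN).
  pose proof (harmonic_le 1 N hN) as H1.
  change (harmonic 1) with (0 + / 1) in H1. rewrite Rinv_1 in H1.
  apply Rmult_lt_compat_r with (r := ln (INR N) + 1) in hb; [|lra].
  unfold Rdiv in hb. rewrite Rmult_assoc, Rinv_l, Rmult_1_r in hb by lra.
  assert (INR b * harmonic (N - 1) <= INR b * (ln (INR N) + 1))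
    by (apply Rmult_le_compat_l; [apply pos_INR|lra]).
  lra.
Qed.

Definition threshold (N b k j : nat) : R :=
  INR k - INR b * (harmonic (N - 1) - harmonic (j - 1)).

Lemma threshold_step (N b k j : nat) : (1 <= j)%nat ->
  threshold N b k j + INR b / INR j = threshold N b k (S j).
Proof.
  intros Hj. destruct j as [|j]; [lia|]. unfold threshold.
  replace (S (S j) - 1)%nat with (S j) by lia. replace (S j - 1)%nat with j by lia.
  cbn [harmonic]. field. apply not_0_INR. lia.
Qed.

Lemma threshold_le (N b k j : nat) : (j <= N)%nat -> threshold N b k j <= INR k.
Proof.
  intros Hj. unfold threshold.
  pose proof (harmonic_le (j - 1) (N - 1) ltac:(lia)). pose proof (pos_INR b). nra.
Qed.

Lemma threshold_1 (N b k : nat) :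
  threshold N b k 1 = INR k - INR b * harmonic (N - 1).
Proof. unfold threshold. change (harmonic (1 - 1)) with 0. ring. Qed.

Theorem mainTheorem5 (N b k k' : nat) (hN : (1 <= N)%nat) (hb : (1 <= b)%nat)
  (hk : (k' < k)%nat)
  (hbound : (INR b < (INR k - INR k') / (ln (INR N) + 1))%R)
  (st : nat -> list nat)
  (h0len : length (st 0%nat) = N)
  (h0 : Forall (fun x => k <= x)%nat (st 0%nat))
  (hplay : forall t : nat, (t < N)%nat -> round b (st t) (st (S t))) :
  forall t : nat, (t <= N)%nat -> Forall (fun x => k' < x)%nat (st t).
Proof.
  assert (Hinv : forall t, (t <= N)%nat -> sums_bounded_by (threshold N b k) (st t)).
  { induction t as [|t IH]; intros Ht.
    - apply (sums_bounded_by_init k); [exact h0|].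
      intros j Hj. apply threshold_le. lia.
    - apply (round_preserves_sums_bounded b _) with (st t).
      + intros j Hj. right. exact (threshold_step N b k j Hj).
      + apply hplay. lia.
      + apply IH. lia. }
  assert (Hthreshold : INR k' < threshold N b k 1).
  { rewrite threshold_1.
    pose proof (mul_harmonic_pred_lt N b _ hN hbound). lra. }
  intros t Ht. apply Forall_forall. intros y Hy.
  apply INR_lt. pose proof (sums_bounded_by_In _ (st t) y (Hinv t Ht) Hy). lra.
Qed.
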